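(* Let $\mathbf{y}\in\mathbb{R}^n$ and $\mathbf{X}=(\mathbf{x}_1,\ldots,\mathbf{x}_p)\in\mathbb{R}^{n\times p}$ satisfy $\sum_{i=1}^n y_i=0$, and for every $j=1,\ldots,p$, $\sum_{i=1}^n x_{ij}=0$ and $\frac1n\sum_{i=1}^n x_{ij}^2=1$. For $\lambda\ge 0$ let $$\widehat{\boldsymbol\beta}(\lambda)=\operatorname*{argmin}_{\boldsymbol\beta\in\mathbb{R}^p}\ \frac{1}{2n}\|\mathbf{y}-\mathbf{X}\boldsymbol\beta\|^2+\lambda\|\boldsymbol\beta\|_1 .$$ Let $\lambda_m=\max_j|\mathbf{x}_j^T\mathbf{y}/n|$ and let $\mathbf{x}_*=\operatorname*{argmax}_{\mathbf{x}_j}|\mathbf{x}_j^T\mathbf{y}|$. Then for any $\lambda\in(0,\lambda_m]$ and any $j$, we have $\widehat{\beta}_j(\lambda)=0$ if $$\left|(\lambda_m+\lambda)\mathbf{x}_j^T\mathbf{y}-(\lambda_m-\lambda)\,\mathrm{sign}(\mathbf{x}_*^T\mathbf{y})\,\lambda_m\,\mathbf{x}_j^T\mathbf{x}_*\right|<2n\lambda\lambda_m-(\lambda_m-\lambda)\sqrt{n\|\mathbf{y}\|^2-n^2\lambda_m^2}.$$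
   Context: $\|\cdot\|$ is the Euclidean norm and $\|\cdot\|_1$ the $\ell_1$ norm. $\widehat{\beta}_j(\lambda)$ denotes the $j$th coordinate of the lasso solution $\widehat{\boldsymbol\beta}(\lambda)$. *)

From HB Require Import structures.
From mathcomp Require Import all_boot all_order all_algebra.
From mathcomp Require Import reals.
Set Implicit Arguments. Unset Strict Implicit. Unset Printing Implicit Defensive.
Import Order.TTheory GRing.Theory Num.Theory.
Local Open Scope ring_scope.

Section Lasso.
Variable R : realType.
Variables n p : nat.

Definition sqnorm (m : nat) (v : 'cV[R]_m) : R := \sum_(i < m) (v i 0) ^+ 2.

Definition l1norm (m : nat) (v : 'cV[R]_m) : R := \sum_(i < m) `|v i 0|.

Definition xty (X : 'M[R]_(n, p)) (y : 'cV[R]_n) (j : 'I_p) : R :=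
  \sum_(i < n) X i j * y i 0.

Definition xtx (X : 'M[R]_(n, p)) (j k : 'I_p) : R :=
  \sum_(i < n) X i j * X i k.

Definition lasso_obj (X : 'M[R]_(n, p)) (y : 'cV[R]_n) (lam : R) (b : 'cV[R]_p) : R :=
  (2 * n%:R)^-1 * sqnorm (y - X *m b) + lam * l1norm b.

Definition is_lasso_sol (X : 'M[R]_(n, p)) (y : 'cV[R]_n) (lam : R) (b : 'cV[R]_p) : Prop :=
  forall b' : 'cV[R]_p, lasso_obj X y lam b <= lasso_obj X y lam b'.

Definition lambda_max (X : 'M[R]_(n, p)) (y : 'cV[R]_n) : R :=
  \big[Num.max/0]_(j < p) `|xty X y j / n%:R|.
End Lasso.

From HB Require Import structures.
From mathcomp Require Import all_boot all_order all_algebra.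
From mathcomp Require Import reals.
From mathcomp Require Import ring lra.
Import Order.TTheory GRing.Theory Num.Theory.
Set Implicit Arguments.
Unset Strict Implicit.
Unset Printing Implicit Defensive.

Local Open Scope ring_scope.

(** Let [r = y - X b] be the residual of a lasso solution. Optimality gives
    [|x_i^T r| <= n lam] for every [i], with equality when [b_i <> 0], and
    [r^T X b = n lam |b|_1].  Since [|x_i^T y| <= n lam_m], the last identity puts
    [r] in the ball with diameter [[(lam / lam_m) y, y]], and the bound for [x_*]
    puts it in a half-space whose boundary passes through [(lam / lam_m) y].  That
    intersection lies in a ball of radius [a sqrt (|y|^2 - n lam_m^2)],
    [a = (lam_m - lam) / (2 lam_m)], so Cauchy-Schwarz bounds [2 lam_m |x_j^T r|]
    by the left-hand side of the hypothesis plus [(lam_m - lam) sqrt (...)].  The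
    hypothesis then forces [|x_j^T r| < n lam], hence [b_j = 0]. *)

Section DotProduct.
Variables (R : realType) (m : nat).
Implicit Types (u v w : 'cV[R]_m) (c : R).

Definition dotv u v : R := \sum_(i < m) u i 0 * v i 0.

Lemma dotvC u v : dotv u v = dotv v u.
Proof. by apply: eq_bigr => i _; rewrite mulrC. Qed.

Lemma dotvDl u v w : dotv (u + v) w = dotv u w + dotv v w.
Proof. by rewrite -big_split; apply: eq_bigr => i _; rewrite mxE mulrDl. Qed.

Lemma dotvNl u w : dotv (- u) w = - dotv u w.
Proof. by rewrite -sumrN; apply: eq_bigr => i _; rewrite mxE mulNr. Qed.

Lemma dotvZl c u w : dotv (c *: u) w = c * dotv u w.
Proof. by rewrite mulr_sumr; apply: eq_bigr => i _; rewrite mxE mulrA. Qed.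

Lemma dotvDr u v w : dotv w (u + v) = dotv w u + dotv w v.
Proof. by rewrite dotvC dotvDl !(dotvC w). Qed.

Lemma dotvNr u w : dotv w (- u) = - dotv w u.
Proof. by rewrite dotvC dotvNl dotvC. Qed.

Lemma dotvZr c u w : dotv w (c *: u) = c * dotv w u.
Proof. by rewrite dotvC dotvZl dotvC. Qed.

Definition dotvE := (dotvDl, dotvDr, dotvNl, dotvNr, dotvZl, dotvZr).

Lemma sqnorm_dotv u : sqnorm u = dotv u u.
Proof. by apply: eq_bigr => i _; rewrite expr2. Qed.

Lemma dotvv_ge0 u : 0 <= dotv u u.
Proof. by apply: sumr_ge0 => i _; rewrite -expr2 sqr_ge0. Qed.

Lemma dotvv_eq0 u : dotv u u = 0 -> u = 0.
Proof.
move=> /psumr_eq0P u0; apply/matrixP => i j; rewrite (ord1 j) mxE.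
by apply/eqP; rewrite -[_ == 0]orbb -mulf_eq0 u0 // => l _; rewrite -expr2 sqr_ge0.
Qed.

Lemma dotv_sqr_le u v : dotv u v ^+ 2 <= dotv u u * dotv v v.
Proof.
have [uu0|uu_neq0] := eqVneq (dotv u u) 0.
  have -> : dotv u v = 0 by rewrite (dotvv_eq0 uu0) -(scale0r 0) dotvZl mul0r.
  by rewrite uu0 expr0n mul0r.
have uu_gt0 : 0 < dotv u u by rewrite lt_def uu_neq0 dotvv_ge0.
pose t := dotv u v / dotv u u.
rewrite -subr_ge0.
have -> : dotv u u * dotv v v - dotv u v ^+ 2 = dotv u u * dotv (v - t *: u) (v - t *: u).
  by rewrite !dotvE (dotvC v u) /t; field.
exact: mulr_ge0 (ltW uu_gt0) (dotvv_ge0 _).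
Qed.

Lemma normr_dotv_le u v : `|dotv u v| <= Num.sqrt (dotv u u * dotv v v).
Proof. by rewrite -sqrtr_sqr ler_wsqrtr // dotv_sqr_le. Qed.

End DotProduct.

Section L1Norm.
Variables (R : realType) (m : nat).

Lemma l1normZ (c : R) (u : 'cV[R]_m) : l1norm (c *: u) = `|c| * l1norm u.
Proof. by rewrite /l1norm mulr_sumr; apply: eq_bigr => i _; rewrite mxE normrM. Qed.

Lemma l1norm_shift_delta (u : 'cV[R]_m) (i : 'I_m) (t : R) :
  l1norm (u + t *: delta_mx i 0) - l1norm u = `|u i 0 + t| - `|u i 0|.
Proof.
rewrite /l1norm (bigD1 i) //= [X in _ - X](bigD1 i) //= !mxE eqxx mulr1.
rewrite (eq_bigr (fun l => `|u l 0|)) => [|l /negbTE il]; last first.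
  by rewrite !mxE il mulr0 addr0.
by rewrite opprD addrACA subrr addr0.
Qed.

End L1Norm.

Lemma lin_coef_ge0 (R : realFieldType) (B Q : R) :
  (forall u, 0 < u <= 1 -> 0 <= u * B + u ^+ 2 * Q) -> 0 <= B.
Proof.
move=> H; rewrite leNgt; apply/negP => B_lt0.
have Q_ge0 := normr_ge0 Q.
have d_gt0 : 0 < `|Q| - B by lra.
pose u := - B / (`|Q| - B).
have u_gt0 : 0 < u by rewrite divr_gt0 ?oppr_gt0.
have u_le1 : u <= 1 by rewrite ler_pdivrMr // mul1r; lra.
have := H u; rewrite u_gt0 u_le1 => /(_ isT).
have : u ^+ 2 * Q <= u ^+ 2 * `|Q| by rewrite ler_wpM2l ?sqr_ge0 ?ler_norm.
have E : u * B + u ^+ 2 * `|Q| = - (u * (B ^+ 2 / (`|Q| - B))).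
  by rewrite /u; field; rewrite gt_eqF.
have B2_gt0 : 0 < B ^+ 2 by rewrite expr2 nmulr_rgt0.
have := mulr_gt0 u_gt0 (divr_gt0 B2_gt0 d_gt0).
lra.
Qed.

Section Correlations.
Variables (R : realType) (n p : nat) (X : 'M[R]_(n, p)) (y : 'cV[R]_n).

Lemma xtyE j : xty X y j = dotv (col j X) y.
Proof. by apply: eq_bigr => i _; rewrite mxE. Qed.

Lemma xtxE j k : xtx X j k = dotv (col j X) (col k X).
Proof. by apply: eq_bigr => i _; rewrite !mxE. Qed.

Lemma dotv_mulmx (b : 'cV[R]_p) : dotv (X *m b) y = \sum_j b j 0 * xty X y j.
Proof.
rewrite /dotv /xty; under eq_bigr do rewrite mxE big_distrl /=.
rewrite exchange_big /=; apply: eq_bigr => l _; rewrite big_distrr /=.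
by apply: eq_bigr => i _; rewrite mulrCA mulrA.
Qed.

Lemma lambda_maxE k : (forall j, `|xty X y j| <= `|xty X y k|) ->
  lambda_max X y = `|xty X y k| / n%:R.
Proof.
have normE j : `|xty X y j / n%:R| = `|xty X y j| / n%:R.
  by rewrite normrM normfV normr_nat.
move=> hk; apply/le_anti; rewrite -normE le_bigmax andbT.
by apply: bigmax_le => [|j _]; rewrite ?normr_ge0 // !normE ler_wpM2r ?invr_ge0.
Qed.

Hypothesis n_gt0 : (0 < n)%N.

Lemma xty_le_lambda_max j : `|xty X y j| <= n%:R * lambda_max X y.
Proof.
have := le_bigmax 0 (fun j => `|xty X y j / n%:R|) j.
by rewrite normrM normfV normr_nat ler_pdivrMr ?ltr0n // mulrC.
Qed.

Lemma dotv_mulmx_le (b : 'cV[R]_p) :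
  dotv (X *m b) y <= n%:R * lambda_max X y * l1norm b.
Proof.
rewrite dotv_mulmx /l1norm mulr_sumr; apply: ler_sum => j _.
rewrite mulrC; apply: le_trans (ler_norm _) _.
by rewrite normrM ler_wpM2r ?xty_le_lambda_max.
Qed.

End Correlations.

Section LassoOptimality.
Variables (R : realType) (n p : nat) (X : 'M[R]_(n, p)) (y : 'cV[R]_n).
Variables (lam : R) (b : 'cV[R]_p).
Hypothesis n_gt0 : (0 < n)%N.
Local Notation r := (y - X *m b).

Lemma lasso_obj_shift (d : 'cV[R]_p) (t : R) :
  2 * n%:R * (lasso_obj X y lam (b + t *: d) - lasso_obj X y lam b) =
  t ^+ 2 * dotv (X *m d) (X *m d) - 2 * t * dotv (X *m d) r
  + 2 * n%:R * lam * (l1norm (b + t *: d) - l1norm b).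
Proof.
have n_neq0 : n%:R != 0 :> R by rewrite pnatr_eq0 -lt0n.
rewrite /lasso_obj !sqnorm_dotv mulmxDr -scalemxAr.
have -> : y - (X *m b + t *: (X *m d)) = r - t *: (X *m d) by rewrite opprD addrA.
rewrite !dotvE (dotvC y (X *m b)) (dotvC y (X *m d)) (dotvC (X *m b) (X *m d)).
by field.
Qed.

Hypotheses (lam_ge0 : 0 <= lam) (hb : is_lasso_sol X y lam b).

Lemma lasso_sol_first_order (d : 'cV[R]_p) (D : R) :
    (forall u, 0 < u <= 1 -> l1norm (b + u *: d) - l1norm b <= u * D) ->
  dotv (X *m d) r <= n%:R * lam * D.
Proof.
move=> hD.
have : 0 <= 2 * (n%:R * lam * D - dotv (X *m d) r).
  apply: (lin_coef_ge0 (Q := dotv (X *m d) (X *m d))) => u u01.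
  have := hb (b + u *: d); rewrite -subr_ge0 => /(mulr_ge0 (ler0n R (2 * n))).
  rewrite natrM lasso_obj_shift.
  have : 2 * n%:R * lam * (l1norm (b + u *: d) - l1norm b) <= 2 * n%:R * lam * (u * D).
    by rewrite ler_wpM2l ?hD // !mulr_ge0.
  lra.
lra.
Qed.

Lemma lasso_sol_corr_le i : `|dotv (col i X) r| <= n%:R * lam.
Proof.
have corr (s : R) : `|s| = 1 -> s * dotv (col i X) r <= n%:R * lam.
  move=> s1; rewrite -dotvZl colE scalemxAr -[n%:R * lam]mulr1.
  apply: lasso_sol_first_order => u /andP[u_gt0 _].
  rewrite scalerA l1norm_shift_delta mulr1 lerBlDl.
  by rewrite (le_trans (ler_normD _ _)) // normrM s1 mulr1 gtr0_norm // addrC.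
have := corr 1 (normr1 _); have := corr (-1) (normrN1 _).
rewrite mul1r mulN1r ler_norml => h1 h2; apply/andP; split; lra.
Qed.

Lemma lasso_sol_corr_active i : b i 0 != 0 -> `|dotv (col i X) r| = n%:R * lam.
Proof.
move=> bi_neq0; apply/le_anti; rewrite lasso_sol_corr_le /=.
have bi_gt0 : 0 < `|b i 0| by rewrite normr_gt0.
have : - b i 0 * dotv (col i X) r <= n%:R * lam * - `|b i 0|.
  rewrite -dotvZl colE scalemxAr; apply: lasso_sol_first_order => u /andP[_ u_le1].
  rewrite scalerA l1norm_shift_delta.
  have -> : b i 0 + u * - b i 0 = b i 0 * (1 - u) by ring.
  by rewrite normrM (ger0_norm (_ : 0 <= 1 - u)) ?subr_ge0 //; lra.
rewrite mulNr mulrN lerN2 => h.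
rewrite -(ler_pM2r bi_gt0) -normrM [_ * b i 0]mulrC.
exact: le_trans h (ler_norm _).
Qed.

Lemma lasso_sol_fit : dotv (X *m b) r = n%:R * lam * l1norm b.
Proof.
apply/le_anti/andP; split.
  apply: lasso_sol_first_order => u /andP[u_gt0 _].
  by rewrite -{1}[b]scale1r -scalerDl l1normZ ger0_norm; lra.
have := @lasso_sol_first_order (- b) (- l1norm b); rewrite mulmxN dotvNl mulrN lerN2.
apply=> u /andP[_ u_le1].
by rewrite scalerN -{1}[b]scale1r -scalerBl l1normZ ger0_norm; lra.
Qed.

End LassoOptimality.

(* The first inequality puts [r] in the ball with diameter [[(1 - 2a) y, y]],
   the second in a half-space whose boundary passes through [(1 - 2a) y];
   the center below is the projection of [(1 - a) y] onto that boundary. *)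
Lemma ball_cap_halfspace_le (R : realType) (m : nat) (y z r : 'cV[R]_m) (N L a : R) :
    0 <= a -> 0 <= L -> sqnorm z = N -> dotv z y = N * L ->
    dotv (y - r) ((1 - 2 * a) *: y - r) <= 0 ->
    dotv z r <= N * ((1 - 2 * a) * L) ->
  sqnorm (r - ((1 - a) *: y - (a * L) *: z)) <= a ^+ 2 * (sqnorm y - N * L ^+ 2).
Proof.
rewrite !sqnorm_dotv => a_ge0 L_ge0 zz zy ball half.
have : 2 * a * L * (dotv z r - N * ((1 - 2 * a) * L)) <= 0.
  by rewrite mulr_ge0_le0 ?mulr_ge0 // subr_le0.
move: ball; rewrite !dotvE (dotvC y r) (dotvC z r) (dotvC y z) zz zy; nra.
Qed.

Section Screening.
Variables (R : realType) (n p : nat) (X : 'M[R]_(n, p)) (y : 'cV[R]_n).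
Variables (lam : R) (k : 'I_p) (b : 'cV[R]_p).
Hypotheses (n_gt0 : (0 < n)%N) (hX : forall i, sqnorm (col i X) = n%:R).
Hypotheses (lam_gt0 : 0 < lam) (lam_le : lam <= lambda_max X y).
Hypotheses (hk : forall j, `|xty X y j| <= `|xty X y k|) (hb : is_lasso_sol X y lam b).
Local Notation L := (lambda_max X y).
Local Notation r := (y - X *m b).
Local Notation s := (Num.sg (xty X y k)).

Let L_gt0 : 0 < L. Proof. exact: lt_le_trans lam_le. Qed.

Let xty_k_neq0 : xty X y k != 0.
Proof.
have := L_gt0.
by rewrite (lambda_maxE hk) pmulr_lgt0 ?invr_gt0 ?ltr0n // normr_gt0.
Qed.

Lemma lasso_sol_dual_ball : dotv (y - r) ((lam / L) *: y - r) <= 0.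
Proof.
have -> : y - r = X *m b by rewrite opprB addrC subrK.
rewrite dotvDr dotvNr dotvZr (lasso_sol_fit n_gt0 (ltW lam_gt0) hb).
have : lam / L * dotv (X *m b) y <= lam / L * (n%:R * L * l1norm b).
  by rewrite ler_wpM2l ?dotv_mulmx_le // divr_ge0 ?ltW.
have -> : lam / L * (n%:R * L * l1norm b) = n%:R * lam * l1norm b.
  by field; rewrite gt_eqF.
lra.
Qed.

Let a := (L - lam) / (2 * L).
Let z := s *: col k X.
Let q := (1 - a) *: y - (a * L) *: z.

Let a_ge0 : 0 <= a.
Proof. by rewrite divr_ge0 ?subr_ge0 // mulr_ge0 // ltW. Qed.

Let lamE : lam = (1 - 2 * a) * L.
Proof. by rewrite /a; field; rewrite gt_eqF. Qed.

Lemma lasso_sol_dual_region : sqnorm (r - q) <= a ^+ 2 * (sqnorm y - n%:R * L ^+ 2).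
Proof.
apply: ball_cap_halfspace_le (ltW L_gt0) _ _ _ _ => //.
- by rewrite !sqnorm_dotv dotvZl dotvZr mulrA -expr2 sqr_sg xty_k_neq0 mul1r -sqnorm_dotv.
- rewrite dotvZl -xtyE -normrEsg (lambda_maxE hk) mulrC mulfVK //.
  by rewrite pnatr_eq0 -lt0n.
- by have := lasso_sol_dual_ball; rewrite {1}lamE mulfK ?gt_eqF.
- rewrite -lamE dotvZl (le_trans (ler_norm _)) // normrM normr_sg xty_k_neq0 mul1r.
  exact: lasso_sol_corr_le (ltW lam_gt0) hb k.
Qed.

Lemma lasso_sol_corr_bound j :
  2 * L * `|dotv (col j X) r|
  <= `|(L + lam) * xty X y j - (L - lam) * s * L * xtx X j k|
     + (L - lam) * Num.sqrt (n%:R * sqnorm y - n%:R ^+ 2 * L ^+ 2).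
Proof.
have qE : 2 * L * dotv (col j X) q
    = (L + lam) * xty X y j - (L - lam) * s * L * xtx X j k.
  by rewrite /q /z !dotvE -xtyE -xtxE /a; field; rewrite gt_eqF.
have dist : `|dotv (col j X) (r - q)|
    <= a * Num.sqrt (n%:R * sqnorm y - n%:R ^+ 2 * L ^+ 2).
  apply: le_trans (normr_dotv_le _ _) _.
  rewrite -!sqnorm_dotv hX -[a](ger0_norm a_ge0) -sqrtr_sqr -sqrtrM ?sqr_ge0 //.
  apply: ler_wsqrtr.
  by have := ler_wpM2l (ler0n R n) lasso_sol_dual_region; lra.
have two_L_gt0 : 0 < 2 * L by rewrite mulr_gt0.
have := ler_wpM2l (ltW two_L_gt0) dist.
have := ler_wpM2l (ltW two_L_gt0) (ler_normD (dotv (col j X) q) (dotv (col j X) (r - q))).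
rewrite -dotvDr addrC subrK -qE normrM gtr0_norm //.
have -> : L - lam = 2 * L * a by rewrite /a; field; rewrite gt_eqF.
lra.
Qed.

End Screening.

Theorem theorem2p1 (R : realType) (n p : nat)
  (X : 'M[R]_(n, p)) (y : 'cV[R]_n)
  (hy : \sum_(i < n) y i 0 = 0)
  (hXc : forall j : 'I_p, \sum_(i < n) X i j = 0)
  (hXs : forall j : 'I_p, n%:R^-1 * \sum_(i < n) (X i j) ^+ 2 = 1)
  (lam : R) (hlam0 : 0 < lam) (hlam1 : lam <= lambda_max X y)
  (k : 'I_p) (hk : forall j : 'I_p, `|xty X y j| <= `|xty X y k|)
  (j : 'I_p)
  (hj : `|(lambda_max X y + lam) * xty X y j
           - (lambda_max X y - lam) * Num.sg (xty X y k) * lambda_max X y * xtx X j k|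
        < 2 * n%:R * lam * lambda_max X y
          - (lambda_max X y - lam)
            * Num.sqrt (n%:R * sqnorm y - n%:R ^+ 2 * lambda_max X y ^+ 2))
  (b : 'cV[R]_p) (hb : is_lasso_sol X y lam b) :
  b j 0 = 0.
Proof.
have n_gt0 : (0 < n)%N.
  rewrite lt0n; apply/eqP => n0.
  by have /eqP := hXs k; rewrite {1}n0 invr0 mul0r eq_sym oner_eq0.
have hX i : sqnorm (col i X) = n%:R.
  have n_neq0 : n%:R != 0 :> R by rewrite pnatr_eq0 -lt0n.
  apply: (mulfI (invr_neq0 n_neq0)); rewrite mulVf //; apply: eq_trans (hXs i).
  by congr (_ * _); apply: eq_bigr => l _; rewrite mxE.
apply/eqP; apply: contraLR hj => /(lasso_sol_corr_active n_gt0 (ltW hlam0) hb) active.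
have := lasso_sol_corr_bound n_gt0 hX hlam0 hlam1 hk hb j.
rewrite active -leNgt; lra.
Qed.
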